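(* Let $F$ be a non-archimedean local field of characteristic different from $2$ and residual characteristic $p$, and $\ell\neq p$ an odd prime. Let $\chi$ be an $\overline{\mathbf{F}}_\ell$-character of $F^\times$ with $\chi^2=\mathbf{1}$. Then $\mathrm{Ext}^1_{\mathrm{GL}_2(F)}(\mathbf{1},\chi\circ\det)=0$, where $\mathrm{Ext}^1_{\mathrm{GL}_2(F)}$ is computed in the category of smooth $\overline{\mathbf{F}}_\ell$-representations of $\mathrm{GL}_2(F)$ with trivial central character. *)

From HB Require Import structures.
From mathcomp Require Import all_boot all_order all_algebra.
Set Implicit Arguments. Unset Strict Implicit. Unset Printing Implicit Defensive.
Import Order.TTheory GRing.Theory Num.Theory.
Local Open Scope ring_scope.

Section LocalField.
Variables (F : fieldType) (v : F -> int).

(* v is a normalized (surjective onto Z) discrete valuation on F^x;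
   its value at 0 is irrelevant (conventionally +oo). *)
Definition discrete_valuation : Prop :=
  [/\ forall x y, x != 0 -> y != 0 -> v (x * y) = v x + v y,
      forall x y, x != 0 -> y != 0 -> x + y != 0 ->
        (v x <= v (x + y)) || (v y <= v (x + y))
    & forall n : int, exists x, x != 0 /\ v x = n ].

(* x and y are congruent modulo p^n, i.e. v(x - y) >= n (with v 0 = +oo). *)
Definition vclose (n : int) (x y : F) : bool := (x == y) || (n <= v (x - y)).

Definition v_complete : Prop :=
  forall u : nat -> F,
    (forall n : int, exists M, forall i j, (M <= i)%N -> (M <= j)%N -> vclose n (u i) (u j)) ->
    exists L, forall n : int, exists M, forall i, (M <= i)%N -> vclose n (u i) L.

Definition in_O (x : F) : bool := (x == 0) || (0 <= v x).

Definition finite_residue_field : Prop :=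
  exists s : seq F, all in_O s /\ forall x, in_O x -> exists2 y, y \in s & vclose 1 x y.

Definition nonarch_local_field : Prop :=
  [/\ discrete_valuation, v_complete & finite_residue_field].

Definition residual_char (p : nat) : Prop := prime p /\ vclose 1 (p%:R) 0.

Definition in_congr (n : nat) (g : 'M[F]_2) : Prop :=
  forall i j, vclose n%:Z (g i j) ((1%:M : 'M[F]_2) i j).

Definition smooth_character (C : fieldType) (chi : F -> C) : Prop :=
  [/\ forall x, x != 0 -> chi x != 0,
      forall x y, x != 0 -> y != 0 -> chi (x * y) = chi x * chi y
    & exists n : nat, forall x, x != 0 -> vclose n%:Z x 1 -> chi x = 1].

(* rho : GL_2(F) -> GL(E) is a smooth representation with trivial central
   character (rho is only meaningful on invertible matrices). *)
Definition smooth_rep_tcc (C : fieldType) (E : lmodType C) (rho : 'M[F]_2 -> E -> E) : Prop :=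
  [/\ forall g, g \in unitmx -> forall (a : C) (x y : E), rho g (a *: x + y) = a *: rho g x + rho g y,
      forall x, rho 1%:M x = x,
      forall g h, g \in unitmx -> h \in unitmx -> forall x, rho (g *m h) x = rho g (rho h x),
      forall x, exists n : nat, forall g, g \in unitmx -> in_congr n g -> rho g x = x
    & forall a : F, a != 0 -> forall x, rho (a%:M) x = x].
End LocalField.

(* C is an algebraic closure of F_l: algebraically closed, characteristic l,
   and every element lies in a finite field F_{l^n}. *)
Definition alg_closure_Fp (l : nat) (C : closedFieldType) : Prop :=
  l \in [pchar C] /\ forall x : C, exists n : nat, (0 < n)%N /\ x ^+ (l ^ n) = x.

Definition lin_from (C : fieldType) (E : lmodType C) (f : C -> E) : Prop :=
  forall a x y : C, f (a * x + y) = a *: f x + f y.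
Definition lin_to (C : fieldType) (E : lmodType C) (f : E -> C) : Prop :=
  forall (a : C) (x y : E), f (a *: x + y) = a * f x + f y.

From HB Require Import structures.
From mathcomp Require Import all_boot all_order all_algebra.
From mathcomp Require Import ring.
From Stdlib Require Import Classical_Prop.
Set Implicit Arguments. Unset Strict Implicit. Unset Printing Implicit Defensive.
Import GRing.Theory Num.Theory.
Local Open Scope ring_scope.

(* For a lift e of 1 in the extension, c_e(g) := rho(g) e - e lies in the line
   chi o det and satisfies c_e(gh) = c_e(g) + chi(det g) c_e(h); it vanishes on
   the centre, and the extension splits as soon as c_e = 0 for some e.
   On the torus: if chi = 1, c_e is a homomorphism killing the centre and the
   Weyl element (2 is invertible in C), hence diag(c,1); if chi(x0) = -1,
   replacing e by e + c_e(diag(x0,1))/2 kills c_e(diag(x0,1)), and the torus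
   being commutative, c_e then kills every diag(c,1). Next, with a = b^2 != 1
   (so chi(a) = 1), conjugation by diag(a,1) makes y |-> c_e(u(y)) an additive
   function invariant under y |-> a y, hence zero; likewise for lower
   unipotents, and the LDU decomposition concludes. *)

Section Mx2.
Variable R : nzRingType.

Definition mx2 (a b c d : R) : 'M[R]_2 :=
  \matrix_(i, j) if val i == 0%N then (if val j == 0%N then a else b)
                 else (if val j == 0%N then c else d).

Definition diag2 (a d : R) := mx2 a 0 0 d.
Definition upper_unip (y : R) := mx2 1 y 0 1.
Definition lower_unip (y : R) := mx2 1 0 y 1.

Lemma mx2_eta (g : 'M[R]_2) : g = mx2 (g 0 0) (g 0 1) (g 1 0) (g 1 1).
Proof.
apply/matrixP => i j; rewrite !mxE.
by case: i => [[|[|//]]] ?; case: j => [[|[|//]]] ? /=; congr (g _ _); apply: val_inj.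
Qed.

Lemma mul_mx2 (a b c d a' b' c' d' : R) :
  mx2 a b c d *m mx2 a' b' c' d' =
  mx2 (a * a' + b * c') (a * b' + b * d') (c * a' + d * c') (c * b' + d * d').
Proof.
apply/matrixP => i j; rewrite !mxE !big_ord_recl big_ord0 !mxE /= addr0.
by case: i => [[|[|//]]] ?; case: j => [[|[|//]]] ? /=.
Qed.

Lemma scalar_mx2 (a : R) : a%:M = diag2 a a.
Proof.
apply/matrixP => i j; rewrite !mxE.
by case: i => [[|[|//]]] ?; case: j => [[|[|//]]] ? /=.
Qed.

End Mx2.

Lemma det_mx2 (R : comNzRingType) (a b c d : R) : \det (mx2 a b c d) = a * d - b * c.
Proof.
rewrite (expand_det_row _ 0) !big_ord_recl big_ord0 addr0 /cofactor !det_mx11 !mxE /=.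
by rewrite /bump /= expr0 expr1 !mul1r mulN1r mulrN.
Qed.

Section Mx2Field.
Variable F : fieldType.
Implicit Types a b c d y : F.

Lemma unitmx_mx2 a b c d : (mx2 a b c d \in unitmx) = (a * d - b * c != 0).
Proof. by rewrite unitmxE det_mx2 unitfE. Qed.

Lemma det_diag2 a d : \det (diag2 a d) = a * d.
Proof. by rewrite det_mx2 mul0r subr0. Qed.

Lemma unitmx_diag2 a d : (diag2 a d \in unitmx) = (a != 0) && (d != 0).
Proof. by rewrite unitmxE det_diag2 unitfE mulf_eq0 negb_or. Qed.

Lemma det_upper_unip y : \det (upper_unip y) = 1.
Proof. by rewrite det_mx2 mulr1 mulr0 subr0. Qed.

Lemma det_lower_unip y : \det (lower_unip y) = 1.
Proof. by rewrite det_mx2 mulr1 mul0r subr0. Qed.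

Lemma unitmx_upper_unip y : upper_unip y \in unitmx.
Proof. by rewrite unitmxE det_upper_unip unitr1. Qed.

Lemma unitmx_lower_unip y : lower_unip y \in unitmx.
Proof. by rewrite unitmxE det_lower_unip unitr1. Qed.

Lemma mx2_LDU a b c d : a != 0 ->
  mx2 a b c d =
  lower_unip (c / a) *m diag2 a ((a * d - b * c) / a) *m upper_unip (b / a).
Proof.
move=> a_neq0; rewrite /diag2 /lower_unip /upper_unip !mul_mx2.
by congr mx2; field.
Qed.

End Mx2Field.

Lemma double_eq0 (C : fieldType) (V : lmodType C) (x : V) :
  (2 : C) != 0 -> x + x = 0 -> x = 0.
Proof.
by move=> two_neq0 /eqP; rewrite -mulr2n -scaler_nat scaler_eq0 (negbTE two_neq0) => /eqP.
Qed.

Lemma additive_dilation_eq0 (F : fieldType) (V : zmodType) (phi : F -> V) (a : F) :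
  a != 1 -> {morph phi : x y / x + y} -> (forall z, phi (a * z) = phi z) ->
  forall y, phi y = 0.
Proof.
move=> a_neq1 phiD phi_dil y.
have a1_neq0 : a - 1 != 0 by rewrite subr_eq0.
have : phi (a * (y / (a - 1))) = phi y + phi (y / (a - 1)).
  by rewrite -phiD; congr phi; field.
by rewrite phi_dil => h; apply: (@addIr _ (phi (y / (a - 1)))); rewrite add0r -h.
Qed.

Lemma natr2_neq0_pchar (R : nzRingType) (l : nat) :
  l \in [pchar R] -> l != 2%N -> (2 : R) != 0.
Proof.
move=> l_pchar; apply: contra_neq => two0.
have two_pchar : 2%N \in [pchar R] by apply/andP; split; rewrite ?two0.
by move: (pcharf_eq l_pchar 2%N); rewrite two_pchar => /esym /eqP.
Qed.

Lemma exists_sqr_neq1 (F : fieldType) (v : F -> int) :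
  discrete_valuation v -> exists2 b : F, b != 0 & b ^+ 2 != 1.
Proof.
case=> vM _ v_onto; have [b [b_neq0 vb]] := v_onto 1.
exists b => //; apply: contraTneq isT => b2.
have v1 : v 1 = 0.
  apply: (@addrI _ (v 1)); rewrite addr0 -vM ?oner_neq0 ?mulr1 //.
by have := vM b b b_neq0 b_neq0; rewrite -expr2 b2 v1 vb.
Qed.

Section Cocycle.
Variables (F C : fieldType) (V : lmodType C) (chi : F -> C) (f : 'M[F]_2 -> V).
Hypothesis fM :
  {in unitmx &, forall g h, f (g *m h) = f g + chi (\det g) *: f h}.
Hypothesis f_scalar : forall c : F, c != 0 -> f c%:M = 0.

Lemma cocycle_mul_eq0 g h : g \in unitmx -> h \in unitmx ->
  f g = 0 -> f h = 0 -> f (g *m h) = 0.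
Proof. by move=> Hg Hh fg0 fh0; rewrite fM // fg0 fh0 scaler0 addr0. Qed.

Lemma cocycle_conj g h k : [/\ g \in unitmx, h \in unitmx & k \in unitmx] ->
  f g = 0 -> f k = 0 -> f (g *m h *m k) = chi (\det g) *: f h.
Proof.
case=> Hg Hh Hk fg0 fk0.
by rewrite fM ?unitmx_mul ?Hg // fk0 scaler0 addr0 fM // fg0 add0r.
Qed.

Lemma cocycle_diag2_trivial_char : (2 : C) != 0 ->
  (forall x, x != 0 -> chi x = 1) -> forall c : F, c != 0 -> f (diag2 c 1) = 0.
Proof.
move=> two_neq0 chi_triv c c_neq0.
have fD : {in unitmx &, forall g h, f (g *m h) = f g + f h}.
  move=> g h Hg Hh; rewrite fM // chi_triv ?scale1r //.
  by rewrite -unitfE -unitmxE.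
pose w := mx2 (0 : F) 1 1 0.
have w_unit : w \in unitmx by rewrite unitmx_mx2 mul0r sub0r oppr_eq0 mulr1 oner_eq0.
have [dc_unit d1_unit] : diag2 c 1 \in unitmx /\ diag2 1 c \in unitmx.
  by rewrite !unitmx_diag2 c_neq0 oner_eq0.
have fw : f w = 0.
  apply: double_eq0 => //; rewrite -fD //.
  have -> : w *m w = 1%:M by rewrite mul_mx2 scalar_mx2; congr mx2; ring.
  exact/f_scalar/oner_neq0.
have f_swap : f (diag2 1 c) = f (diag2 c 1).
  have <- : w *m diag2 c 1 *m w = diag2 1 c.
    by rewrite !mul_mx2; congr mx2; ring.
  by rewrite !fD ?unitmx_mul ?w_unit // fw add0r addr0.
apply: double_eq0 => //; rewrite -{2}f_swap -fD //.
have -> : diag2 c 1 *m diag2 1 c = c%:M by rewrite mul_mx2 scalar_mx2; congr mx2; ring.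
exact: f_scalar.
Qed.

Lemma cocycle_diag2_sign_char (x0 : F) : (2 : C) != 0 -> x0 != 0 -> chi x0 = -1 ->
  f (diag2 x0 1) = 0 -> forall c : F, c != 0 -> f (diag2 c 1) = 0.
Proof.
move=> two_neq0 x0_neq0 chi_x0 fx0 c c_neq0.
have [dc_unit dx0_unit] : diag2 c 1 \in unitmx /\ diag2 x0 1 \in unitmx.
  by rewrite !unitmx_diag2 c_neq0 x0_neq0 oner_eq0.
have comm : diag2 c 1 *m diag2 x0 1 = diag2 x0 1 *m diag2 c 1.
  by rewrite !mul_mx2; congr mx2; ring.
have := fM dc_unit dx0_unit; rewrite comm fM // fx0 scaler0 addr0 add0r.
rewrite det_diag2 mulr1 chi_x0 scaleN1r => /esym /eqP.
by rewrite -addr_eq0 => /eqP /(double_eq0 two_neq0).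
Qed.

Hypothesis chi1 : chi 1 = 1.
Hypothesis f_diag2 : forall c : F, c != 0 -> f (diag2 c 1) = 0.
Variable a : F.
Hypotheses (a_neq0 : a != 0) (a_neq1 : a != 1) (chi_a : chi a = 1).

Lemma cocycle_diag2_eq0 b d : b != 0 -> d != 0 -> f (diag2 b d) = 0.
Proof.
move=> b_neq0 d_neq0.
have -> : diag2 b d = d%:M *m diag2 (b / d) 1.
  by rewrite scalar_mx2 mul_mx2; congr mx2; field.
apply: cocycle_mul_eq0;
  rewrite ?f_scalar ?f_diag2 ?unitmx_diag2 ?mulf_neq0 ?invr_neq0 ?oner_eq0 //.
by rewrite scalar_mx2 unitmx_diag2 d_neq0.
Qed.

Lemma cocycle_conj_diag2 h : h \in unitmx ->
  f (diag2 a 1 *m h *m diag2 a^-1 1) = f h.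
Proof.
move=> Hh; have ai_neq0 : a^-1 != 0 by rewrite invr_eq0.
rewrite cocycle_conj ?f_diag2 ?det_diag2 ?mulr1 ?chi_a ?scale1r //.
by split; rewrite // unitmx_diag2 oner_eq0 andbT.
Qed.

Lemma cocycle_upper_unip y : f (upper_unip y) = 0.
Proof.
apply: (additive_dilation_eq0 (phi := f \o @upper_unip F) a_neq1) => [y1 y2 | z] /=.
  have -> : upper_unip (y1 + y2) = upper_unip y1 *m upper_unip y2.
    by rewrite mul_mx2; congr mx2; ring.
  by rewrite fM ?unitmx_upper_unip // det_upper_unip chi1 scale1r.
rewrite -(cocycle_conj_diag2 (unitmx_upper_unip z)); congr f.
by rewrite !mul_mx2; congr mx2; field.
Qed.

Lemma cocycle_lower_unip y : f (lower_unip y) = 0.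
Proof.
apply: (additive_dilation_eq0 (phi := f \o @lower_unip F) a_neq1) => [y1 y2 | z] /=.
  have -> : lower_unip (y1 + y2) = lower_unip y1 *m lower_unip y2.
    by rewrite mul_mx2; congr mx2; ring.
  by rewrite fM ?unitmx_lower_unip // det_lower_unip chi1 scale1r.
rewrite -(cocycle_conj_diag2 (unitmx_lower_unip (a * z))); congr f.
by rewrite !mul_mx2; congr mx2; field.
Qed.

Lemma cocycle_eq0 g : g \in unitmx -> f g = 0.
Proof.
rewrite [g]mx2_eta unitmx_mx2; move: (g 0 0) (g 0 1) (g 1 0) (g 1 1).
move=> b c d e det_neq0.
wlog b_neq0 : b c d e det_neq0 / b != 0 => [wlog_b|].
  have [b0|] := eqVneq b 0; last exact: wlog_b.
  have -> : mx2 b c d e = upper_unip (-1) *m mx2 d (c + e) d e.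
    by rewrite b0 mul_mx2; congr mx2; ring.
  have det_eq : d * e - (c + e) * d = b * e - c * d by rewrite b0; ring.
  apply: cocycle_mul_eq0; rewrite ?unitmx_upper_unip ?cocycle_upper_unip //.
    by rewrite unitmx_mx2 det_eq.
  apply: wlog_b; rewrite ?det_eq //.
  by apply: contra_neq det_neq0 => d0; rewrite b0 d0; ring.
have D_neq0 : (b * e - c * d) / b != 0 by rewrite mulf_neq0 ?invr_eq0.
rewrite mx2_LDU //.
apply: cocycle_mul_eq0; rewrite ?unitmx_upper_unip ?cocycle_upper_unip //.
  by rewrite !unitmx_mul unitmx_lower_unip unitmx_diag2 b_neq0 D_neq0.
apply: cocycle_mul_eq0;
  rewrite ?unitmx_lower_unip ?cocycle_lower_unip ?cocycle_diag2_eq0 //.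
by rewrite unitmx_diag2 b_neq0 D_neq0.
Qed.

End Cocycle.

Section Extension.
Variables (F C : fieldType) (chi : F -> C) (E : lmodType C).
Variables (rho : 'M[F]_2 -> E -> E) (i : C -> E) (q : E -> C).
Hypothesis rho_lin : forall g, g \in unitmx -> linear (rho g).
Hypothesis rhoM : forall g h, g \in unitmx -> h \in unitmx ->
  forall x, rho (g *m h) x = rho g (rho h x).
Hypothesis rho_scalar : forall a : F, a != 0 -> forall x, rho a%:M x = x.
Hypothesis i_lin : lin_from i.
Hypothesis rho_i : forall g, g \in unitmx -> forall c, rho g (i c) = i (chi (\det g) * c).
Hypothesis q_lin : lin_to q.
Hypothesis q_rho : forall g, g \in unitmx -> forall e, q (rho g e) = q e.
Hypothesis q_ker : forall e, q e = 0 <-> exists c, e = i c.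

HB.instance Definition _ := GRing.isLinear.Build C E C *%R q q_lin.

Definition lift_cocycle (e : E) (g : 'M[F]_2) := rho g e - e.

Lemma rho_kerq g w : g \in unitmx -> q w = 0 -> rho g w = chi (\det g) *: w.
Proof.
move=> Hg /q_ker [c ->]; rewrite rho_i //.
exact: (scalable_linear (i_lin : linear (i : C^o -> E))).
Qed.

Lemma q_lift_cocycle e g : g \in unitmx -> q (lift_cocycle e g) = 0.
Proof. by move=> Hg; rewrite /lift_cocycle linearB /= q_rho // subrr. Qed.

Lemma lift_cocycleM e : {in unitmx &, forall g h,
  lift_cocycle e (g *m h) = lift_cocycle e g + chi (\det g) *: lift_cocycle e h}.
Proof.
move=> g h Hg Hh; rewrite -rho_kerq ?q_lift_cocycle // /lift_cocycle.
by rewrite (zmod_morphism_linear (rho_lin Hg)) rhoM // [RHS]addrC addrA subrK.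
Qed.

Lemma lift_cocycle_scalar e (c : F) : c != 0 -> lift_cocycle e c%:M = 0.
Proof. by move=> c_neq0; rewrite /lift_cocycle rho_scalar // subrr. Qed.

Lemma lift_fixed_by_diag2 e0 (x0 : F) : (2 : C) != 0 -> x0 != 0 -> chi x0 = -1 ->
  q e0 = 1 -> exists e, q e = 1 /\ lift_cocycle e (diag2 x0 1) = 0.
Proof.
move=> two_neq0 x0_neq0 chi_x0 qe0.
have d_unit : diag2 x0 1 \in unitmx by rewrite unitmx_diag2 x0_neq0 oner_eq0.
set w := lift_cocycle e0 (diag2 x0 1).
have half2 : 2^-1 + 2^-1 = 1 :> C by field.
set u := 2^-1 *: w.
have qu : q u = 0 by rewrite linearZ /= q_lift_cocycle // mulr0.
have rho_u : rho (diag2 x0 1) u = - u.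
  by rewrite rho_kerq // det_diag2 mulr1 chi_x0 scaleN1r.
have rho_e0 : rho (diag2 x0 1) e0 = e0 + u + u.
  by rewrite -addrA -scalerDl half2 scale1r addrC subrK.
exists (e0 + u); split; first by rewrite linearD /= qu qe0 addr0.
rewrite /lift_cocycle (GRing.semilinear_linear (rho_lin d_unit)).2.
by rewrite rho_u rho_e0 addrK subrr.
Qed.

Lemma exists_lift_cocycle_diag2_eq0 e0 : (2 : C) != 0 ->
  (forall x, x != 0 -> chi x ^+ 2 = 1) -> q e0 = 1 ->
  exists e, q e = 1 /\ forall c : F, c != 0 -> lift_cocycle e (diag2 c 1) = 0.
Proof.
move=> two_neq0 chi_sqr qe0.
case: (classic (exists2 x0, x0 != 0 & chi x0 != 1)) =>
  [[x0 x0_neq0 chi_x0_neq1] | chi_triv].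
  have chi_x0 : chi x0 = -1.
    by move/eqP: (chi_sqr x0 x0_neq0); rewrite sqrf_eq1 (negbTE chi_x0_neq1) => /eqP.
  have [e [qe1 e_fixed]] := lift_fixed_by_diag2 two_neq0 x0_neq0 chi_x0 qe0.
  exists e; split=> //.
  exact: (cocycle_diag2_sign_char (@lift_cocycleM e) two_neq0 x0_neq0 chi_x0 e_fixed).
exists e0; split=> //.
apply: cocycle_diag2_trivial_char (@lift_cocycleM e0) (lift_cocycle_scalar e0) two_neq0 _.
by move=> x x_neq0; apply/eqP/negPn/negP => chi_x_neq1; apply: chi_triv; exists x.
Qed.

Lemma split_of_fixed_lift e : q e = 1 -> (forall g, g \in unitmx -> rho g e = e) ->
  exists s : C -> E, [/\ lin_from s, forall c, q (s c) = c
    & forall g, g \in unitmx -> forall c, rho g (s c) = s c].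
Proof.
move=> qe1 e_fixed; exists ( *:%R^~ e); split => [a x y | c | g Hg c] /=.
- by rewrite scalerDl scalerA.
- by rewrite linearZ /= qe1 mulr1.
- by rewrite (scalable_linear (rho_lin Hg)) e_fixed.
Qed.

End Extension.

Theorem lemma4p4 (F : fieldType) (v : F -> int) (p l : nat)
    (C : closedFieldType) (chi : F -> C)
    (HF : nonarch_local_field v) (Hchar2 : (2 : F) != 0)
    (Hp : residual_char v p)
    (Hl : prime l) (Hl2 : l != 2%N) (Hlp : l != p)
    (HC : alg_closure_Fp l C)
    (Hchi : smooth_character v chi)
    (Hchi2 : forall x : F, x != 0 -> chi x ^+ 2 = 1) :
  forall (E : lmodType C) (rho : 'M[F]_2 -> E -> E) (i : C -> E) (q : E -> C),
    smooth_rep_tcc v rho ->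
    lin_from i -> injective i ->
    (forall g, g \in unitmx -> forall c, rho g (i c) = i (chi (\det g) * c)) ->
    lin_to q -> (forall c, exists e, q e = c) ->
    (forall g, g \in unitmx -> forall e, q (rho g e) = q e) ->
    (forall e, q e = 0 <-> exists c, e = i c) ->
    exists s : C -> E,
      [/\ lin_from s, forall c, q (s c) = c
        & forall g, g \in unitmx -> forall c, rho g (s c) = s c].
Proof.
move=> E rho i q [rho_lin _ rhoM _ rho_scalar] i_lin _ rho_i q_lin q_onto q_rho q_ker.
have two_neq0 : (2 : C) != 0 := natr2_neq0_pchar HC.1 Hl2.
have [[v_discrete _ _] [_ chiM _]] := (HF, Hchi).
have chi1 : chi 1 = 1 by rewrite -[1]mulr1 chiM ?oner_neq0 // -expr2 Hchi2 ?oner_neq0.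
have [b b_neq0 b2_neq1] := exists_sqr_neq1 v_discrete.
have chi_b2 : chi (b ^+ 2) = 1 by rewrite expr2 chiM // -expr2 Hchi2.
have [e0 qe0] := q_onto 1.
have [e [qe1 e_diag2]] := exists_lift_cocycle_diag2_eq0
  rho_lin rhoM rho_scalar i_lin rho_i q_lin q_rho q_ker two_neq0 Hchi2 qe0.
have eM := lift_cocycleM rho_lin rhoM i_lin rho_i q_lin q_rho q_ker e.
apply: (split_of_fixed_lift rho_lin q_lin qe1) => g Hg; apply/subr0_eq.
exact: (cocycle_eq0 eM (lift_cocycle_scalar rho_scalar e) chi1 e_diag2
  (expf_neq0 2 b_neq0) b2_neq1 chi_b2 Hg).
Qed.
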